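(* For the gradient-descent approximate policy iteration sequence described in the context, let $c:=\frac{\sqrt{|S|}\,\|\Phi\|_\infty}{\sigma_{\min,\Phi}}$, $$\beta:=\alpha^{m+H-1}\delta_{FV}+c\,\alpha_{GD,\gamma}^\eta(\alpha^{m+H-1}\delta_{FV}+1),$$ $$\tau:=(1+c\,\alpha_{GD,\gamma}^\eta)\Big(\frac{\alpha^m+\alpha^{m+H-1}}{1-\alpha}\delta_{FV}+\delta_{app}+\delta_{FV}\epsilon_{PE}\Big)+\frac{c\,\alpha_{GD,\gamma}^\eta}{1-\alpha}.$$ Then for every $k\ge1$, $$\|J^{\mu_k}-J_k\|_\infty\le\beta\,\|J_{k-1}-J^{\mu_{k-1}}\|_\infty+\tau.$$
   Context: Consider a Markov decision process with finite state space $S$ (with $|S|$ states), finite action space $A$, transition probabilities $P_{ij}(a)$, rewards $r(s,a)\in[0,1]$, and discount factor $\alpha\in(0,1)$. A (deterministic stationary) policy is a map $\mu:S\to A$; its value is $J^\mu(s)=E[\sum_{t\ge0}\alpha^t r(s_t,\mu(s_t))\mid s_0=s]$, and $J^*(s)=\max_\mu J^\mu(s)$. For a policy $\mu$, $(T_\mu J)(s)=r(s,\mu(s))+\alpha\sum_j P_{sj}(\mu(s))J(j)$; the Bellman operator is $(TJ)(s)=\max_{a\in A}\{r(s,a)+\alpha\sum_j P_{sj}(a)J(j)\}$; powers denote repeated application. $\|\cdot\|_\infty$ denotes the max norm and the induced matrix norm; $\|\cdot\|_2$ the Euclidean norm. Gradient-descent approximate policy iteration: fix integers $m\ge1$, $H\ge1$,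 $\eta\ge1$, a step size $\gamma>0$, constants $\epsilon_{LA},\epsilon_{PE}\ge0$, a feature matrix $\Phi\in\mathbb{R}^{|S|\times d}$ whose row $i$ is $\phi(i)^\top$, and subsets $D_k\subseteq S$ ($k\ge0$) such that $\{\phi(i)\}_{i\in D_k}$ has rank $d$. Let $\Phi_{D_k}$ be the submatrix of $\Phi$ with rows indexed by $D_k$, $P_k\in\{0,1\}^{|D_k|\times|S|}$ the matrix selecting the coordinates in $D_k$, and $\mathcal{M}_{k+1}:=\Phi(\Phi_{D_k}^\top\Phi_{D_k})^{-1}\Phi_{D_k}^\top P_k$. Start with $\theta_0\in\mathbb{R}^d$, $J_0=\Phi\theta_0$, and an arbitrary policy $\mu_0$. For each $k\ge0$: $\mu_{k+1}$ is any policy with $\|T^HJ_k-T_{\mu_{k+1}}T^{H-1}J_k\|_\infty\le\epsilon_{LA}$; $w_{k+1}\in\mathbb{R}^{|S|}$ satisfies $w_{k+1}(i)=0$ for $i\notin D_k$ and $\|w_{k+1}\|_\infty\le\epsilon_{PE}$; $\hat J_{k+1}:=T^m_{\mu_{k+1}}T^{H-1}J_k+w_{k+1}$; set $\theta_{k+1,0}=\theta_k$ and for $\ell=1,\dots,\eta$, $\theta_{k+1,\ell}=\theta_{k+1,\ell-1}-\gamma\big(\Phi_{D_k}^\top\Phi_{D_k}\theta_{k+1,\ell-1}-\Phi_{D_k}^\top P_k\hat J_{k+1}\big)$; then $\theta_{k+1}=\theta_{k+1,\eta}$ and $J_{k+1}=\Phi\theta_{k+1}$. Define $\delta_{FV}:=\sup_{k\ge1}\|\mathcal{M}_k\|_\infty$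 (assumed finite), $\delta_{app}:=\sup_{k\ge1}\sup_\mu\|\mathcal{M}_kJ^\mu-J^\mu\|_\infty$ (inner supremum over all policies), $\alpha_{GD,\gamma}:=\sup_{k\ge0}\max_i|1-\gamma\lambda_i(\Phi_{D_k}^\top\Phi_{D_k})|$ where $\lambda_i$ is the $i$-th eigenvalue, and $\sigma_{\min,\Phi}$ the smallest singular value of $\Phi$. *)

From HB Require Import structures.
From mathcomp Require Import all_boot all_order all_algebra.
From mathcomp Require Import all_classical all_reals all_analysis.
Set Implicit Arguments. Unset Strict Implicit. Unset Printing Implicit Defensive.
Import Order.TTheory GRing.Theory Num.Theory numFieldNormedType.Exports.
Local Open Scope ring_scope.
Local Open Scope classical_set_scope.

Definition vnorm {R : realType} {n : nat} (v : 'cV[R]_n) : R :=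
  \big[Num.max/0]_(i < n) `|v i ord0|.

Definition mxnorm {R : realType} {p q : nat} (M : 'M[R]_(p, q)) : R :=
  \big[Num.max/0]_(i < p) \sum_(j < q) `|M i j|.

Definition sumseries {R : realType} (u : R ^nat) : R := limn (series u).

Section MDP.
Variables (R : realType) (n : nat) (A : finType).
(* P a i j = P_{ij}(a) ; r i a = r(i,a) ; policies are 'I_n -> A *)
Variables (P : A -> 'M[R]_n) (r : 'I_n -> A -> R) (alpha : R).

Definition Pmu (mu : 'I_n -> A) : 'M[R]_n := \matrix_(i, j) P (mu i) i j.
Definition rmu (mu : 'I_n -> A) : 'cV[R]_n := \col_i r i (mu i).

Definition Tmu (mu : 'I_n -> A) (J : 'cV[R]_n) : 'cV[R]_n :=
  rmu mu + alpha *: (Pmu mu *m J).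

Definition Tbell (J : 'cV[R]_n) : 'cV[R]_n :=
  \col_i sup (range (fun a : A => r i a + alpha * \sum_(j < n) P a i j * J j ord0)).

(* J^mu(s) = E[sum_t alpha^t r(s_t, mu(s_t)) | s_0 = s]
          = sum_{t>=0} alpha^t (P_mu^t r_mu)(s) *)
Definition Jpol (mu : 'I_n -> A) : 'cV[R]_n :=
  \col_s sumseries (fun t : nat => alpha ^+ t * ((Pmu mu ^+ t *m rmu mu) s ord0)).
End MDP.

Section Approx.
Variables (R : realType) (n d : nat).

(* P_D : selection matrix of the coordinates in D (rows ordered by enum D) *)
Definition selmx (D : {set 'I_n}) : 'M[R]_(#|D|, n) :=
  \matrix_(i < #|D|, j < n) ((enum_val i == j)%:R).

Definition PhiD (Phi : 'M[R]_(n, d)) (D : {set 'I_n}) : 'M[R]_(#|D|, d) :=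
  selmx D *m Phi.

Definition Mproj (Phi : 'M[R]_(n, d)) (D : {set 'I_n}) : 'M[R]_n :=
  Phi *m invmx ((PhiD Phi D)^T *m PhiD Phi D) *m (PhiD Phi D)^T *m selmx D.

Definition gd_step (gamma : R) (Phi : 'M[R]_(n, d)) (D : {set 'I_n})
  (Jhat : 'cV[R]_n) (th : 'cV[R]_d) : 'cV[R]_d :=
  th - gamma *: (((PhiD Phi D)^T *m PhiD Phi D) *m th
                 - (PhiD Phi D)^T *m (selmx D *m Jhat)).

Definition sigma_min (Phi : 'M[R]_(n, d)) : R :=
  Num.sqrt (inf [set a : R | eigenvalue (Phi^T *m Phi) a]).

Definition alpha_GD (gamma : R) (Phi : 'M[R]_(n, d)) (D : nat -> {set 'I_n}) : R :=
  sup [set x : R | exists k a, eigenvalue ((PhiD Phi (D k))^T *m PhiD Phi (D k)) a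
                                /\ x = `|1 - gamma * a|].

(* delta_FV = sup_{k>=1} ||M_k||_inf, with M_{k+1} built from D_k *)
Definition delta_FV (Phi : 'M[R]_(n, d)) (D : nat -> {set 'I_n}) : R :=
  sup [set x : R | exists k, x = mxnorm (Mproj Phi (D k))].
End Approx.

Definition delta_app (R : realType) (n d : nat) (A : finType)
  (P : A -> 'M[R]_n) (r : 'I_n -> A -> R) (alpha : R)
  (Phi : 'M[R]_(n, d)) (D : nat -> {set 'I_n}) : R :=
  sup [set x : R | exists (k : nat) (mu : 'I_n -> A),
         x = vnorm (Mproj Phi (D k) *m Jpol P r alpha mu - Jpol P r alpha mu)].

From HB Require Import structures.
From mathcomp Require Import all_boot all_order all_algebra.
From mathcomp Require Import all_classical all_reals all_analysis.
From mathcomp Require Import complex sesquilinear spectral.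
From mathcomp Require Import ring lra.
Import Order.TTheory GRing.Theory Num.Theory numFieldNormedType.Exports.
Local Open Scope ring_scope.
Set Implicit Arguments. Unset Strict Implicit. Unset Printing Implicit Defensive.

(* Let [M] be the projection [Mproj Phi (D k)] and [Jhat] the noisy m-step
   evaluation target of the iteration, so that
     |J^mu_{k+1} - Phi theta_{k+1}| <= |J^mu_{k+1} - M Jhat| + |Phi theta_{k+1} - M Jhat|.
   The first term is handled by the alpha-contraction of [Tmu] and of the Bellman
   operator, the fixed-point property of [J^mu], and the definitions of delta_FV
   and delta_app.  For the second, [Phi (lsq_sol Jhat) = M Jhat] and the error
   [theta - lsq_sol Jhat] evolves under the symmetric matrix
   [1 - gamma Phi_D^T Phi_D], whose eigenvalues are bounded by alpha_GD; hence it
   contracts by alpha_GD^eta in the Euclidean norm, and converting from and to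
   the max norm costs the factor c.  All value functions lie in
   [0, 1/(1-alpha)]^n, which bounds the remaining distances between them. *)

Section Norms.
Variable R : realType.

Lemma vnorm_ge0 n (v : 'cV[R]_n) : 0 <= vnorm v.
Proof. by rewrite /vnorm; elim/big_ind: _ => // x y hx hy; rewrite le_max hx. Qed.

Lemma coord_le_vnorm n (v : 'cV[R]_n) i : `|v i ord0| <= vnorm v.
Proof. exact: (le_bigmax _ (fun i => `|v i ord0|)). Qed.

Lemma vnorm_le n (v : 'cV[R]_n) b :
  0 <= b -> (forall i, `|v i ord0| <= b) -> vnorm v <= b.
Proof. by move=> b0 h; apply: bigmax_le. Qed.

Lemma vnormD n (u v : 'cV[R]_n) : vnorm (u + v) <= vnorm u + vnorm v.
Proof.
apply: vnorm_le; first by rewrite addr_ge0 ?vnorm_ge0.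
by move=> i; rewrite mxE (le_trans (ler_normD _ _)) // lerD ?coord_le_vnorm.
Qed.

Lemma vnormN n (v : 'cV[R]_n) : vnorm (- v) = vnorm v.
Proof. by rewrite /vnorm; apply: eq_bigr => i _; rewrite mxE normrN. Qed.

Lemma vnorm_distC n (u v : 'cV[R]_n) : vnorm (u - v) = vnorm (v - u).
Proof. by rewrite -opprB vnormN. Qed.

Lemma vnormZ n a (v : 'cV[R]_n) : vnorm (a *: v) = `|a| * vnorm v.
Proof.
have vnormZ_le b (u : 'cV[R]_n) : vnorm (b *: u) <= `|b| * vnorm u.
  apply: vnorm_le => [|i]; first by rewrite mulr_ge0 ?vnorm_ge0.
  by rewrite mxE normrM ler_wpM2l ?coord_le_vnorm.
apply/le_anti; rewrite vnormZ_le /=.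
have [->|a0] := eqVneq a 0; first by rewrite normr0 mul0r vnorm_ge0.
rewrite -ler_pdivlMl ?normr_gt0 // -normrV ?unitfE //.
by rewrite -{1}(scale1r v) -(mulVf a0) -scalerA vnormZ_le.
Qed.

Lemma mxnorm_ge0 p q (M : 'M[R]_(p, q)) : 0 <= mxnorm M.
Proof.
rewrite /mxnorm; elim/big_ind: _ => // [x y hx hy|i _]; first by rewrite le_max hx.
by apply: sumr_ge0 => j _.
Qed.

Lemma row_sum_le_mxnorm p q (M : 'M[R]_(p, q)) i : \sum_j `|M i j| <= mxnorm M.
Proof. exact: (le_bigmax _ (fun i => \sum_j `|M i j|)). Qed.

Lemma vnorm_mulmx p q (M : 'M[R]_(p, q)) v : vnorm (M *m v) <= mxnorm M * vnorm v.
Proof.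
apply: vnorm_le => [|i]; first by rewrite mulr_ge0 ?mxnorm_ge0 ?vnorm_ge0.
rewrite mxE (le_trans (ler_norm_sum _ _ _)) //.
apply: (@le_trans _ _ (\sum_j `|M i j| * vnorm v)).
  by apply: ler_sum => j _; rewrite normrM ler_wpM2l ?coord_le_vnorm.
by rewrite -mulr_suml ler_wpM2r ?vnorm_ge0 ?row_sum_le_mxnorm.
Qed.

Lemma vnorm_gt0 n (v : 'cV[R]_n) : v != 0 -> 0 < vnorm v.
Proof.
move=> v0; have [i vi] : exists i, v i ord0 != 0.
  apply/existsP; apply: contraR v0 => /existsPn h; apply/eqP/matrixP => i j.
  by rewrite ord1 mxE; move/negPn: (h i) => /eqP.
by apply: lt_le_trans (coord_le_vnorm _ i); rewrite normr_gt0.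
Qed.

Definition sqnorm n (v : 'cV[R]_n) : R := (v^T *m v) ord0 ord0.

Lemma sqnormE n (v : 'cV[R]_n) : sqnorm v = \sum_i v i ord0 ^+ 2.
Proof. by rewrite /sqnorm mxE; apply: eq_bigr => i _; rewrite mxE expr2. Qed.

Lemma sqnorm_ge0 n (v : 'cV[R]_n) : 0 <= sqnorm v.
Proof. by rewrite sqnormE sumr_ge0 // => i _; rewrite sqr_ge0. Qed.

Lemma sqnorm_eq0 n (v : 'cV[R]_n) : sqnorm v = 0 -> v = 0.
Proof.
rewrite sqnormE => h; apply/matrixP => i j; rewrite ord1 mxE.
have := @psumr_eq0P _ _ xpredT (fun i => v i ord0 ^+ 2) (fun i _ => sqr_ge0 _) h i isT.
by move/eqP; rewrite sqrf_eq0 => /eqP.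
Qed.

Lemma sqnorm_gt0 n (v : 'cV[R]_n) : v != 0 -> 0 < sqnorm v.
Proof.
move=> v0; rewrite lt_neqAle sqnorm_ge0 andbT eq_sym.
by apply: contra v0 => /eqP /sqnorm_eq0 ->.
Qed.

Lemma vnorm_le_sqrt_sqnorm n (v : 'cV[R]_n) : vnorm v <= Num.sqrt (sqnorm v).
Proof.
apply: vnorm_le => [|i]; first exact: sqrtr_ge0.
rewrite -sqrtr_sqr ler_sqrt ?sqnorm_ge0 //.
by rewrite sqnormE (bigD1 i) //= lerDl sumr_ge0 // => j _; rewrite sqr_ge0.
Qed.

Lemma sqrt_sqnorm_le_vnorm n (v : 'cV[R]_n) :
  Num.sqrt (sqnorm v) <= Num.sqrt n%:R * vnorm v.
Proof.
have vn0 := vnorm_ge0 v.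
rewrite -[vnorm v]ger0_norm // -sqrtr_sqr -sqrtrM ?ler0n //.
rewrite ler_sqrt ?mulr_ge0 ?ler0n ?sqr_ge0 // sqnormE.
rewrite (@le_trans _ _ (\sum_(i < n) vnorm v ^+ 2)) //.
  apply: ler_sum => i _; rewrite -real_normK ?num_real // lerXn2r ?nnegrE //.
  by rewrite coord_le_vnorm.
by rewrite sumr_const card_ord mulr_natl.
Qed.

Lemma sqnorm_mulmx p q (B : 'M[R]_(p, q)) x :
  (x^T *m (B^T *m B) *m x) ord0 ord0 = sqnorm (B *m x).
Proof. by rewrite /sqnorm trmx_mul !mulmxA. Qed.

Lemma gram_sym p q (B : 'M[R]_(p, q)) : (B^T *m B)^T = B^T *m B.
Proof. by rewrite trmx_mul trmxK. Qed.
End Norms.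

Section SymmetricSpectral.
Variables (R : realType) (d : nat) (G : 'M[R]_d).
Hypothesis G_sym : G^T = G.
Local Notation C := (R[i]).
Local Notation iota := (real_complex R).
Local Open Scope sesquilinear_scope.

Lemma real_complex_real (x : R) : iota x \is Num.real.
Proof. by apply/complex_realP; exists x. Qed.

Lemma map_real_complex_tr m p (M : 'M[R]_(m, p)) :
  (map_mx iota M)^t* = map_mx iota M^T.
Proof. by apply/matrixP => i j; rewrite !mxE conj_Creal ?real_complex_real. Qed.

Let Gc := map_mx iota G.

Let Gc_herm : Gc \is hermsymmx.
Proof.
apply: realsym_hermsym.
  rewrite qualifE /=; apply/eqP; rewrite expr0 scale1r; apply/matrixP => i j.
  by rewrite /Gc !mxE -{1}G_sym mxE.
by apply/mxOverP => i j; rewrite /Gc mxE real_complex_real.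
Qed.

Let U := spectralmx Gc.
Let sp := spectral_diag Gc.

Let Gc_diag : Gc = U^t* *m diag_mx sp *m U.
Proof.
have := orthomx_spectralP (A := Gc); rewrite (hermitian_normalmx Gc_herm) => h.
by have /(_ isT) := elimT h; rewrite invmx_unitary ?spectral_unitarymx.
Qed.

Let UUt : U *m U^t* = 1%:M.
Proof. exact/unitarymxP/spectral_unitarymx. Qed.

Let UtU : U^t* *m U = 1%:M.
Proof. by rewrite -invmx_unitary ?spectral_unitarymx // mulVmx ?spectral_unit. Qed.

Let sp_real i : sp 0 i \is Num.real.
Proof. by have /mxOverP := hermitian_spectral_diag_real Gc_herm; apply. Qed.

Let sp_eigenvalue i : eigenvalue G (complex.Re (sp 0 i)).
Proof.
rewrite eigenvalue_root_char -(fmorph_root iota) map_char_poly.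
suff : root (char_poly Gc) (sp 0 i).
  by congr (root _ _); apply: esym; apply: RRe_real.
rewrite -eigenvalue_root_char.
apply/eigenvalueP; exists (row i U).
  rewrite -/Gc Gc_diag !mulmxA -row_mul UUt row1.
  rewrite [delta_mx 0 i *m _](_ : _ = sp 0 i *: delta_mx 0 i).
    by rewrite -scalemxAl -rowE.
  apply/matrixP => a b; rewrite mul_mx_diag !mxE.
  by case: (eqVneq i b) => [->|nib]; rewrite ?andbT ?andbF ?mulr0 ?mul0r // mulrC.
apply/eqP => Ui0.
have : row i (U *m U^t*) = 0 by rewrite row_mul Ui0 mul0mx.
by rewrite UUt => /matrixP /(_ 0 i); rewrite !mxE eqxx /= => /eqP; rewrite oner_eq0.
Qed.

Let quad_diag (N : 'M[R]_d) (t : 'rV[C]_d) (x : 'cV[R]_d) :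
  map_mx iota N = U^t* *m diag_mx t *m U ->
  iota ((x^T *m N *m x) 0 0) =
  \sum_i t 0 i * (((U *m map_mx iota x) i 0)^* * (U *m map_mx iota x) i 0).
Proof.
move=> hN.
have -> : iota ((x^T *m N *m x) 0 0) = (map_mx iota (x^T *m N *m x)) 0 0 by rewrite [RHS]mxE.
rewrite !map_mxM hN -map_real_complex_tr.
set xc := map_mx iota x.
have -> : xc^t* *m (U^t* *m diag_mx t *m U) *m xc =
          (U *m xc)^t* *m diag_mx t *m (U *m xc) by rewrite trmx_mul map_mxM !mulmxA.
rewrite mxE; apply: eq_bigr => i _.
by rewrite mul_mx_diag !mxE mulrA [_ * t 0 i]mulrC.
Qed.

Let real_weight (y : C) : iota (complex.Re (y^* * y)) = y^* * y.
Proof. by apply: RRe_real; apply: ger0_real; rewrite mulrC mul_conjC_ge0. Qed.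

Lemma symmx_spectral_weights : exists s : 'I_d -> R,
  (forall i, eigenvalue G (s i)) /\
  forall x : 'cV[R]_d, exists2 wt : 'I_d -> R, (forall i, 0 <= wt i) &
   [/\ sqnorm x = \sum_i wt i,
       (x^T *m G *m x) 0 0 = \sum_i s i * wt i &
       forall a b : R, sqnorm ((a%:M + b *: G) *m x) = \sum_i (a + b * s i) ^+ 2 * wt i].
Proof.
exists (fun i => complex.Re (sp 0 i)); split=> // x.
set y := U *m map_mx iota x.
exists (fun i => complex.Re ((y i 0)^* * y i 0)).
  by move=> i; have := mul_conjC_ge0 (y i 0); rewrite mulrC lecE => /andP[].
have spE i : iota (complex.Re (sp 0 i)) = sp 0 i by exact: RRe_real.
split.
- have -> : sqnorm x = (x^T *m 1%:M *m x) 0 0 by rewrite mulmx1.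
  apply: (@complexI R).
  rewrite (quad_diag (t := const_mx 1)); last first.
    by rewrite diag_const_mx mulmx1 UtU map_mx1.
  rewrite rmorph_sum; apply: eq_bigr => i _.
  by rewrite mxE mul1r; apply/esym/real_weight.
- apply: (@complexI R); rewrite (quad_diag x Gc_diag) rmorph_sum.
  apply: eq_bigr => i _; rewrite rmorphM /= spE; congr (_ * _).
  exact/esym/real_weight.
move=> a b; set M := a%:M + b *: G.
have M_sym : M^T = M by rewrite /M linearD /= tr_scalar_mx linearZ /= G_sym.
apply: (@complexI R); rewrite -sqnorm_mulmx M_sym.
set t := \row_i (iota a + iota b * sp 0 i).
have Mc : map_mx iota M = U^t* *m diag_mx t *m U.
  rewrite map_mxD map_scalar_mx map_mxZ -/Gc Gc_diag.
  have -> : diag_mx t = (iota a)%:M + iota b *: diag_mx sp.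
    apply/matrixP => i j; rewrite !mxE.
    by case: (eqVneq i j) => [->|nij]; rewrite ?eqxx ?mulr1n ?mulr0n ?mulr1 ?mulr0 ?addr0.
  rewrite mulmxDr mulmxDl mul_mx_scalar -scalemxAl UtU scalemx1.
  by rewrite -scalemxAr -scalemxAl.
rewrite (quad_diag (t := \row_i (t 0 i * t 0 i))); last first.
  rewrite map_mxM Mc -!mulmxA; congr (_ *m _).
  by rewrite !mulmxA mulmxtVK ?spectral_unitarymx // mulmx_diag.
rewrite rmorph_sum; apply: eq_bigr => i _.
rewrite rmorphM rmorphXn rmorphD rmorphM /= spE !mxE expr2; congr (_ * _).
exact/esym/real_weight.
Qed.
End SymmetricSpectral.

Section LinearAlgebra.
Variable R : realType.

Lemma mulmx_colfree_eq0 p q (B : 'M[R]_(p, q)) (x : 'cV[R]_q) :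
  \rank B = q -> B *m x = 0 -> x = 0.
Proof.
move=> rB Bx; apply: trmx_inj; rewrite trmx0; apply/eqP.
have rf : row_free B^T by rewrite /row_free mxrank_tr rB.
by rewrite -(mulmx_free_eq0 _ rf) -trmx_mul Bx trmx0.
Qed.

Lemma gram_unit p q (B : 'M[R]_(p, q)) : \rank B = q -> B^T *m B \in unitmx.
Proof.
move=> rB; rewrite -row_free_unit -kermx_eq0; apply/eqP/row_matrixP => i.
rewrite row0; set v := row i _.
have hv : v *m (B^T *m B) = 0 by rewrite /v -row_mul mulmx_ker row0.
apply: trmx_inj; rewrite trmx0; apply: (mulmx_colfree_eq0 rB).
by apply: sqnorm_eq0; rewrite -sqnorm_mulmx trmxK hv mul0mx mxE.
Qed.

Lemma sym_eigenvalue_le_mxnorm d (M : 'M[R]_d) a :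
  M^T = M -> eigenvalue M a -> `|a| <= mxnorm M.
Proof.
move=> Ms /eigenvalueP [v hv v0].
have vT0 : v^T != 0 by apply: contra v0 => /eqP h; apply/eqP/trmx_inj; rewrite h trmx0.
have hx : M *m v^T = a *: v^T by rewrite -{1}Ms -trmx_mul hv linearZ.
by have := vnorm_mulmx M v^T; rewrite hx vnormZ ler_pM2r // vnorm_gt0.
Qed.
End LinearAlgebra.

Section FiniteSup.
Variables (R : realType) (A : finType).

Lemma le_sup_range (g : A -> R) a : g a <= sup (range g).
Proof.
apply: ub_le_sup; last by exists a.
exists (\big[Num.max/0]_b g b) => _ [b _ <-].
exact: (le_bigmax _ g).
Qed.

Lemma sup_range_le (g : A -> R) b (a0 : A) : (forall a, g a <= b) -> sup (range g) <= b.
Proof. by move=> h; apply: ge_sup => [|_ [a _ <-]]; [exists (g a0), a0 | apply: h]. Qed.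
End FiniteSup.

Section MDP.
Variables (R : realType) (n : nat) (A : finType).
Variables (P : A -> 'M[R]_n) (r : 'I_n -> A -> R) (alpha : R).
Hypothesis P_ge0 : forall a i j, 0 <= P a i j.
Hypothesis P_sum1 : forall a i, \sum_(j < n) P a i j = 1.
Hypothesis r01 : forall i a, 0 <= r i a <= 1.
Hypothesis alpha01 : 0 < alpha < 1.

Local Notation Tmu := (Tmu P r alpha).
Local Notation Tbell := (Tbell P r alpha).
Local Notation Jpol := (Jpol P r alpha).

Let alpha_ge0 : 0 <= alpha. Proof. by case/andP: alpha01 => /ltW. Qed.
Let alpha_lt1 : alpha < 1. Proof. by case/andP: alpha01. Qed.

Definition boxed (b : R) (v : 'cV[R]_n) := forall j, 0 <= v j ord0 <= b.

Lemma inv1Balpha_ge0 : 0 <= (1 - alpha)^-1.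
Proof. by rewrite invr_ge0 subr_ge0 ltW. Qed.

Let inv1BalphaE : 1 + alpha * (1 - alpha)^-1 = (1 - alpha)^-1.
Proof.
have : 1 - alpha != 0 by rewrite subr_eq0 eq_sym lt_eqF.
by move=> ?; field.
Qed.

Lemma vnormB_boxed b u v : 0 <= b -> boxed b u -> boxed b v -> vnorm (u - v) <= b.
Proof.
move=> b0 hu hv; apply: vnorm_le => // i.
rewrite !mxE ler_norml; case/andP: (hu i) => h1 h2; case/andP: (hv i) => h3 h4.
apply/andP; split; lra.
Qed.

Lemma mxnorm_Pmu_le1 mu : mxnorm (Pmu P mu) <= 1.
Proof.
apply: bigmax_le => // i _.
rewrite (eq_bigr (fun j => P (mu i) i j)) ?P_sum1 // => j _.
by rewrite mxE ger0_norm.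
Qed.

Lemma Pmu_boxed mu b z : boxed b z -> boxed b (Pmu P mu *m z).
Proof.
move=> hz i; rewrite mxE; apply/andP; split.
  by apply: sumr_ge0 => j _; rewrite mxE mulr_ge0 //; case/andP: (hz j).
apply: (@le_trans _ _ (\sum_j P (mu i) i j * b)).
  by apply: ler_sum => j _; rewrite mxE ler_wpM2l //; case/andP: (hz j).
by rewrite -mulr_suml P_sum1 mul1r.
Qed.

Lemma Tmu_contraction mu x y : vnorm (Tmu mu x - Tmu mu y) <= alpha * vnorm (x - y).
Proof.
rewrite /Tmu opprD addrACA subrr add0r -scalerBr -mulmxBr vnormZ ger0_norm //.
rewrite ler_wpM2l // (le_trans (vnorm_mulmx _ _)) //.
by rewrite ler_piMl ?vnorm_ge0 ?mxnorm_Pmu_le1.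
Qed.

Lemma Tbell_contraction (a0 : A) J K :
  vnorm (Tbell J - Tbell K) <= alpha * vnorm (J - K).
Proof.
apply: vnorm_le => [|i]; first by rewrite mulr_ge0 ?vnorm_ge0.
set e := alpha * vnorm (J - K).
(* one-sided bound; the other side follows by exchanging [J] and [K] *)
have half (J1 K1 : 'cV[R]_n) : vnorm (J1 - K1) = vnorm (J - K) ->
  Tbell J1 i ord0 <= Tbell K1 i ord0 + e.
  move=> hJK; rewrite !mxE; apply: (sup_range_le a0) => a.
  rewrite -lerBlDr; apply: le_trans (le_sup_range _ a).
  suff : alpha * \sum_j P a i j * J1 j ord0 <= alpha * \sum_j P a i j * K1 j ord0 + e.
    by lra.
  rewrite /e -lerBlDl -mulrBr ler_wpM2l // -sumrB -hJK.
  apply: (@le_trans _ _ (\sum_j P a i j * vnorm (J1 - K1))).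
    apply: ler_sum => j _; rewrite -mulrBr ler_wpM2l //.
    by apply: le_trans (coord_le_vnorm _ j); rewrite !mxE ler_norm.
  by rewrite -mulr_suml P_sum1 mul1r.
have := half J K erefl; have := half K J (vnorm_distC _ _).
have -> : (Tbell J - Tbell K) i ord0 = Tbell J i ord0 - Tbell K i ord0 by rewrite !mxE.
by rewrite ler_norml => *; apply/andP; split; lra.
Qed.

Lemma Tbell_boxed (a0 : A) J :
  boxed (1 - alpha)^-1 J -> boxed (1 - alpha)^-1 (Tbell J).
Proof.
move=> hJ i; rewrite mxE.
have hs a : 0 <= \sum_(j < n) P a i j * J j ord0 <= (1 - alpha)^-1.
  by have /(_ i) := Pmu_boxed (fun=> a) hJ; rewrite mxE; under eq_bigr do rewrite mxE.
apply/andP; split.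
  apply: le_trans (le_sup_range _ a0).
  by case/andP: (r01 i a0) => h1 _; case/andP: (hs a0) => h2 _; rewrite addr_ge0 ?mulr_ge0.
apply: (sup_range_le a0) => a; rewrite -[X in _ <= X]inv1BalphaE.
case/andP: (r01 i a) => _ h1; case/andP: (hs a) => _ h2.
by rewrite lerD // ler_wpM2l.
Qed.

Lemma iter_contraction (f : 'cV[R]_n -> 'cV[R]_n) :
  (forall x y, vnorm (f x - f y) <= alpha * vnorm (x - y)) ->
  forall k x y, vnorm (iter k f x - iter k f y) <= alpha ^+ k * vnorm (x - y).
Proof.
move=> hf; elim=> [|k IH] x y; first by rewrite expr0 mul1r.
by rewrite !iterS (le_trans (hf _ _)) // exprS -mulrA ler_wpM2l.
Qed.

Lemma iter_boxed (f : 'cV[R]_n -> 'cV[R]_n) b :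
  (forall x, boxed b x -> boxed b (f x)) -> forall k x, boxed b x -> boxed b (iter k f x).
Proof. by move=> hf; elim=> [//|k IH] x hx; rewrite iterS; apply/hf/IH. Qed.

Definition Jpart mu N : 'cV[R]_n :=
  \sum_(t < N) alpha ^+ t *: (Pmu P mu ^+ t *m rmu r mu).

Lemma JpartS mu N : Jpart mu N.+1 = Tmu mu (Jpart mu N).
Proof.
rewrite /Jpart big_ord_recl /= expr0 scale1r mul1mx; congr (_ + _).
rewrite mulmx_sumr scaler_sumr; apply: eq_bigr => t _.
by rewrite /= !exprS -scalerA -mulmxE -mulmxA scalemxAr.
Qed.

Lemma Jpart_boxed mu N : boxed (1 - alpha)^-1 (Jpart mu N).
Proof.
elim: N => [|N IH] i; first by rewrite /Jpart big_ord0 mxE lexx inv1Balpha_ge0.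
have /andP[r0 r1] := r01 i (mu i).
have /andP[PJ0 PJ1] := Pmu_boxed mu IH i.
rewrite JpartS [_ i ord0]mxE [rmu _ _ _ _]mxE [X in _ + X]mxE.
apply/andP; split; first by rewrite addr_ge0 ?mulr_ge0.
by rewrite -inv1BalphaE lerD ?ler_wpM2l.
Qed.

Lemma Pmu_pow_rmu_boxed mu t : boxed 1 (Pmu P mu ^+ t *m rmu r mu).
Proof.
elim: t => [|t IH] i; first by rewrite expr0 mul1mx mxE.
by rewrite exprS -mulmxE -mulmxA; apply: Pmu_boxed.
Qed.

Lemma Jpart_nondecreasing mu i : nondecreasing_seq (fun N => Jpart mu N i ord0).
Proof.
apply/nondecreasing_seqP => N; rewrite /Jpart big_ord_recr /= [X in _ <= X]mxE lerDl.
have /andP[h _] := Pmu_pow_rmu_boxed mu N i.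
by rewrite mxE mulr_ge0 ?exprn_ge0.
Qed.

Lemma Jpol_lim mu i : Jpol mu i ord0 = limn (fun N => Jpart mu N i ord0).
Proof.
rewrite mxE /sumseries; congr (limn _); apply: funext => N.
by rewrite /series /= big_mkord /Jpart summxE; apply: eq_bigr => t _; rewrite [RHS]mxE.
Qed.

Lemma Jpart_cvg mu i : cvgn (fun N => Jpart mu N i ord0).
Proof.
apply: nondecreasing_is_cvgn; first exact: Jpart_nondecreasing.
by exists (1 - alpha)^-1 => _ [N _ <-]; case/andP: (Jpart_boxed mu N i).
Qed.

Lemma Jpol_boxed mu : boxed (1 - alpha)^-1 (Jpol mu).
Proof.
move=> i; rewrite Jpol_lim; apply/andP; split.
  apply: limr_ge; first exact: Jpart_cvg.
  by apply: nearW => N; case/andP: (Jpart_boxed mu N i).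
apply: limr_le; first exact: Jpart_cvg.
by apply: nearW => N; case/andP: (Jpart_boxed mu N i).
Qed.

Lemma vnorm_Jpol_le mu : vnorm (Jpol mu) <= (1 - alpha)^-1.
Proof.
apply: vnorm_le => [|i]; first exact: inv1Balpha_ge0.
by case/andP: (Jpol_boxed mu i) => h1 h2; rewrite ger0_norm.
Qed.

(* [J^mu] is the limit of [Tmu mu] iterated on [0], hence a fixed point by continuity. *)
Lemma Jpol_fixpoint mu : Tmu mu (Jpol mu) = Jpol mu.
Proof.
apply/matrixP => s j; rewrite ord1 {j} [RHS]Jpol_lim; apply/esym/(cvg_lim (@Rhausdorff R)).
rewrite -cvg_shiftS /=.
have -> : (fun N => Jpart mu N.+1 s ord0) = (fun N =>
    r s (mu s) + alpha * \sum_(j < n) Pmu P mu s j * Jpart mu N j ord0).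
  by apply: funext => N; rewrite JpartS !mxE.
rewrite /Tmu !mxE; apply: cvgD; first exact: cvg_cst.
apply: cvgMr; apply: (@cvg_big R 'I_n +%R 0 xpredT add_continuous) => j _.
by apply: cvgMr; rewrite Jpol_lim; apply: Jpart_cvg.
Qed.

Lemma iter_Jpol_fixpoint mu k : iter k (Tmu mu) (Jpol mu) = Jpol mu.
Proof. by elim: k => [//|k IH]; rewrite iterS IH Jpol_fixpoint. Qed.
End MDP.

Section GradientDescent.
Variables (R : realType) (n d : nat) (Phi : 'M[R]_(n, d)) (gamma : R).

Definition gram (D : {set 'I_n}) := (PhiD Phi D)^T *m PhiD Phi D.

Definition lsq_sol (D : {set 'I_n}) (J : 'cV[R]_n) : 'cV[R]_d :=
  invmx (gram D) *m ((PhiD Phi D)^T *m (selmx R D *m J)).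

Definition gd_mx (D : {set 'I_n}) : 'M[R]_d := 1%:M - gamma *: gram D.

Lemma Phi_lsq_sol D J : Phi *m lsq_sol D J = Mproj Phi D *m J.
Proof. by rewrite /lsq_sol /Mproj /gram !mulmxA. Qed.

(* The least-squares solution is the fixed point of the gradient step, which
   is affine with linear part [gd_mx D]. *)
Lemma iter_gd_stepB D J th k : \rank (PhiD Phi D) = d ->
  iter k (gd_step gamma Phi D J) th - lsq_sol D J =
  iter k (mulmx (gd_mx D)) (th - lsq_sol D J).
Proof.
move=> rD; elim: k => [//|k IH]; rewrite !iterS -IH /gd_step -/(gram D).
have -> : (PhiD Phi D)^T *m (selmx R D *m J) = gram D *m lsq_sol D J.
  by rewrite /lsq_sol mulKVmx ?gram_unit.
by rewrite -mulmxBr /gd_mx mulmxBl mul1mx -scalemxAl addrAC.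
Qed.

Lemma sqnorm_gd_mx_le D ag :
  (forall a, eigenvalue (gram D) a -> `|1 - gamma * a| <= ag) ->
  forall z, sqnorm (gd_mx D *m z) <= ag ^+ 2 * sqnorm z.
Proof.
move=> hag z; rewrite /gd_mx -scaleNr.
have [s [s_eig /(_ z) [wt wt_ge0 [-> _ ->]]]] :=
  symmx_spectral_weights (gram_sym (PhiD Phi D) : (gram D)^T = gram D).
rewrite mulr_sumr; apply: ler_sum => i _; rewrite ler_wpM2r // mulNr.
by rewrite -real_normK ?num_real // lerXn2r ?nnegrE ?hag // (le_trans _ (hag _ (s_eig i))).
Qed.

Lemma sqnorm_iter_gd_mx_le D ag k z :
  (forall a, eigenvalue (gram D) a -> `|1 - gamma * a| <= ag) ->
  sqnorm (iter k (mulmx (gd_mx D)) z) <= (ag ^+ k) ^+ 2 * sqnorm z.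
Proof.
move=> hag; elim: k => [|k IH]; first by rewrite expr0 expr1n mul1r.
rewrite iterS (le_trans (sqnorm_gd_mx_le hag _)) //.
by rewrite [ag ^+ k.+1]exprS exprMn -[_ * _ * sqnorm z]mulrA ler_wpM2l ?sqr_ge0.
Qed.
End GradientDescent.

Section SmallestSingularValue.
Local Open Scope classical_set_scope.
Variables (R : realType) (n d : nat) (Phi : 'M[R]_(n, d)).
Hypotheses (d_gt0 : (0 < d)%N) (rank_Phi : \rank Phi = d).

Let eigenvalue_quad (M : 'M[R]_d) a : eigenvalue M a ->
  exists2 x : 'cV[R]_d, x != 0 & (x^T *m M *m x) ord0 ord0 = a * sqnorm x.
Proof.
move=> /eigenvalueP [v hv v0]; exists v^T.
  by apply: contra v0 => /eqP h; apply/eqP/trmx_inj; rewrite h trmx0.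
by rewrite trmxK hv -scalemxAl mxE /sqnorm trmxK.
Qed.

Let inf_eigenvalue_gram :
  0 < inf [set a | eigenvalue (Phi^T *m Phi) a] /\
  forall x, inf [set a | eigenvalue (Phi^T *m Phi) a] * sqnorm x <= sqnorm (Phi *m x).
Proof.
have [s [s_eig weights]] := symmx_spectral_weights (gram_sym Phi).
have eig_gt0 a : eigenvalue (Phi^T *m Phi) a -> 0 < a.
  move=> /eigenvalue_quad [x x0 hxa].
  have : 0 < sqnorm (Phi *m x).
    by apply: sqnorm_gt0; apply: contra x0 => /eqP /(mulmx_colfree_eq0 rank_Phi) ->.
  by rewrite -sqnorm_mulmx hxa pmulr_lgt0 // sqnorm_gt0.
have [i0 _ s_min] := @arg_minP _ _ _ (Ordinal d_gt0) xpredT s isT.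
have s_lb a : eigenvalue (Phi^T *m Phi) a -> s i0 <= a.
  move=> /eigenvalue_quad [x x0 hxa].
  have [wt wt_ge0 [sqx Gx _]] := weights x.
  rewrite -(@ler_pM2r _ (sqnorm x)) ?sqnorm_gt0 // -hxa Gx sqx mulr_sumr.
  by apply: ler_sum => i _; rewrite ler_wpM2r // s_min.
split.
  apply: (lt_le_trans (eig_gt0 _ (s_eig i0))).
  by apply: lb_le_inf; [exists (s i0); apply: s_eig | move=> a; apply: s_lb].
move=> x; have [wt wt_ge0 [sqx Gx _]] := weights x.
rewrite -sqnorm_mulmx Gx sqx mulr_sumr; apply: ler_sum => i _.
by rewrite ler_wpM2r //; apply: ge_inf; [exists (s i0) => a; apply: s_lb | exact: s_eig].
Qed.

Lemma sigma_min_gt0 : 0 < sigma_min Phi.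
Proof. by rewrite sqrtr_gt0; case: inf_eigenvalue_gram. Qed.

Lemma sigma_min_sqrt_sqnorm_le x :
  sigma_min Phi * Num.sqrt (sqnorm x) <= Num.sqrt (sqnorm (Phi *m x)).
Proof.
by rewrite -sqrtrM ?ler_sqrt ?sqnorm_ge0; case: inf_eigenvalue_gram => [/ltW].
Qed.
End SmallestSingularValue.

Section Suprema.
Local Open Scope classical_set_scope.
Variables (R : realType) (n d : nat) (Phi : 'M[R]_(n, d)) (D : nat -> {set 'I_n}).

(* Each supremum ranges over finitely many sets [D k], which makes it finite. *)
Lemma alpha_GD_ge gamma k a : eigenvalue (gram Phi (D k)) a ->
  `|1 - gamma * a| <= alpha_GD gamma Phi D.
Proof.
move=> ha; apply: ub_le_sup; last by exists k, a.
exists (1 + `|gamma| * \big[Num.max/0]_(S : {set 'I_n}) mxnorm (gram Phi S)).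
move=> _ [k' [a' [ha' ->]]].
apply: (le_trans (ler_normB _ _)); rewrite normr1 lerD2l normrM ler_wpM2l //.
apply: (le_trans (sym_eigenvalue_le_mxnorm (gram_sym _) ha')).
exact: (le_bigmax _ (fun S => mxnorm (gram Phi S))).
Qed.

Lemma delta_FV_ge k : mxnorm (Mproj Phi (D k)) <= delta_FV Phi D.
Proof.
apply: ub_le_sup; last by exists k.
exists (\big[Num.max/0]_(S : {set 'I_n}) mxnorm (Mproj Phi S)) => _ [k' ->].
exact: (le_bigmax _ (fun S => mxnorm (Mproj Phi S))).
Qed.

Variables (A : finType) (P : A -> 'M[R]_n) (r : 'I_n -> A -> R) (alpha : R).
Hypothesis P_ge0 : forall a i j, 0 <= P a i j.
Hypothesis P_sum1 : forall a i, \sum_(j < n) P a i j = 1.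
Hypothesis r01 : forall i a, 0 <= r i a <= 1.
Hypothesis alpha01 : 0 < alpha < 1.

Lemma delta_app_ge k mu :
  vnorm (Mproj Phi (D k) *m Jpol P r alpha mu - Jpol P r alpha mu) <= delta_app P r alpha Phi D.
Proof.
have Jmu_le := vnorm_Jpol_le P_ge0 P_sum1 r01 alpha01.
apply: ub_le_sup; last by exists k, mu.
exists ((\big[Num.max/0]_(S : {set 'I_n}) mxnorm (Mproj Phi S) + 1) * (1 - alpha)^-1).
move=> _ [k' [mu' ->]].
apply: (le_trans (vnormD _ _)); rewrite vnormN mulrDl mul1r lerD ?Jmu_le //.
apply: (le_trans (vnorm_mulmx _ _)); apply: ler_pM; rewrite ?mxnorm_ge0 ?vnorm_ge0 ?Jmu_le //.
exact: (le_bigmax _ (fun S => mxnorm (Mproj Phi S))).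
Qed.
End Suprema.

Section OneIteration.
Variables (R : realType) (n d : nat) (A : finType).
Variables (P : A -> 'M[R]_n) (r : 'I_n -> A -> R) (alpha : R).
Hypothesis P_ge0 : forall a i j, 0 <= P a i j.
Hypothesis P_sum1 : forall a i, \sum_(j < n) P a i j = 1.
Hypothesis r01 : forall i a, 0 <= r i a <= 1.
Hypothesis alpha01 : 0 < alpha < 1.
Variables (m H eta : nat) (gamma : R) (Phi : 'M[R]_(n, d)) (D : {set 'I_n}).
Variables (mu mu' : 'I_n -> A) (w : 'cV[R]_n) (th : 'cV[R]_d).
Hypotheses (H_gt0 : (0 < H)%N) (d_gt0 : (0 < d)%N) (rank_PhiD : \rank (PhiD Phi D) = d).
Variables (dFV dapp ag eps : R).
Hypothesis mxnorm_Mproj_le : mxnorm (Mproj Phi D) <= dFV.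
Hypothesis Mproj_Jpol_le : vnorm (Mproj Phi D *m Jpol P r alpha mu' - Jpol P r alpha mu') <= dapp.
Hypothesis gd_rate : forall a, eigenvalue (gram Phi D) a -> `|1 - gamma * a| <= ag.
Hypothesis w_le : vnorm w <= eps.

Local Notation Tmu := (Tmu P r alpha).
Local Notation Tbell := (Tbell P r alpha).
Local Notation Jpol := (Jpol P r alpha).
Let M := Mproj Phi D.
Let Jk := Phi *m th.
Let Jhat := iter m (Tmu mu') (iter H.-1 Tbell Jk) + w.
Let th' := iter eta (gd_step gamma Phi D Jhat) th.
Let e := vnorm (Jk - Jpol mu).
Let c := Num.sqrt n%:R * mxnorm Phi / sigma_min Phi.
Let q := c * ag ^+ eta.

Let alpha_ge0 : 0 <= alpha. Proof. by case/andP: alpha01 => /ltW. Qed.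

Let rank_Phi : \rank Phi = d.
Proof.
apply/eqP; rewrite eqn_leq rank_leq_col -{1}rank_PhiD.
exact: mxrankM_maxr.
Qed.

Let n_gt0 : (0 < n)%N.
Proof. by rewrite (leq_trans d_gt0) // -rank_Phi rank_leq_row. Qed.

Let a0 : A := mu (Ordinal n_gt0).

Let ag_ge0 : 0 <= ag.
Proof.
have [s [s_eig _]] := symmx_spectral_weights (gram_sym (PhiD Phi D)).
exact: le_trans (normr_ge0 _) (gd_rate (s_eig (Ordinal d_gt0))).
Qed.

Let q_ge0 : 0 <= q.
Proof.
by rewrite /q /c !mulr_ge0 ?exprn_ge0 ?invr_ge0 ?sqrtr_ge0 ?mxnorm_ge0.
Qed.

Lemma evaluation_error :
  vnorm (Jpol mu' - M *m Jhat) <=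
    dapp + dFV * (alpha ^+ m * ((1 - alpha)^-1 + alpha ^+ H.-1 * e) + eps).
Proof.
have -> : Jpol mu' - M *m Jhat = - (M *m Jpol mu' - Jpol mu') + M *m (Jpol mu' - Jhat).
  by rewrite mulmxBr opprB addrA subrK.
apply: le_trans (vnormD _ _) _; rewrite vnormN lerD //.
apply: le_trans (vnorm_mulmx _ _) _; rewrite ler_pM ?mxnorm_ge0 ?vnorm_ge0 //.
have -> : Jpol mu' - Jhat =
    (iter m (Tmu mu') (Jpol mu') - iter m (Tmu mu') (iter H.-1 Tbell Jk)) - w.
  by rewrite iter_Jpol_fixpoint // /Jhat opprD addrA.
apply: le_trans (vnormD _ _) _; rewrite vnormN lerD //.
have Tmu_c := iter_contraction alpha01 (Tmu_contraction r P_ge0 P_sum1 alpha01 mu').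
have Tbell_c := iter_contraction alpha01 (Tbell_contraction r P_ge0 P_sum1 alpha01 a0).
apply: le_trans (Tmu_c _ _ _) _; rewrite ler_wpM2l ?exprn_ge0 //.
set Y := iter H.-1 Tbell (Jpol mu).
have -> : Jpol mu' - iter H.-1 Tbell Jk = (Jpol mu' - Y) + (Y - iter H.-1 Tbell Jk).
  by rewrite addrA subrK.
apply: le_trans (vnormD _ _) _; apply: lerD.
  have Jmu_box := Jpol_boxed P_ge0 P_sum1 r01 alpha01.
  apply: vnormB_boxed (inv1Balpha_ge0 alpha01) (Jmu_box _) _.
  by apply: iter_boxed (Jmu_box _) => J; apply: Tbell_boxed P_ge0 P_sum1 r01 alpha01 a0 J.
by apply: le_trans (Tbell_c _ _ _) _; rewrite vnorm_distC.
Qed.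

(* The gradient iteration contracts by [ag] in the Euclidean norm of the
   parameters; [c] is the price of converting from and to the max norm. *)
Lemma vnorm_Phi_iter_gd_mx_le k z :
  vnorm (Phi *m iter k (mulmx (gd_mx Phi gamma D)) z) <= c * ag ^+ k * vnorm (Phi *m z).
Proof.
pose y := iter k (mulmx (gd_mx Phi gamma D)) z.
have sigma_gt0 := sigma_min_gt0 d_gt0 rank_Phi.
have y_le : Num.sqrt (sqnorm y) <= ag ^+ k * Num.sqrt (sqnorm z).
  have hy : sqnorm y <= ag ^+ k ^+ 2 * sqnorm z by exact: sqnorm_iter_gd_mx_le.
  rewrite -[ag ^+ k]ger0_norm ?exprn_ge0 // -sqrtr_sqr -sqrtrM ?sqr_ge0 //.
  by rewrite ler_sqrt // mulr_ge0 ?sqr_ge0 ?sqnorm_ge0.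
have z_le : Num.sqrt (sqnorm z) <= Num.sqrt n%:R * vnorm (Phi *m z) / sigma_min Phi.
  rewrite ler_pdivlMr // mulrC.
  exact: le_trans (sigma_min_sqrt_sqnorm_le d_gt0 rank_Phi z) (sqrt_sqnorm_le_vnorm _).
apply: le_trans (vnorm_mulmx _ _) _.
apply: le_trans (ler_wpM2l (mxnorm_ge0 _) (vnorm_le_sqrt_sqnorm y)) _.
apply: le_trans (ler_wpM2l (mxnorm_ge0 _) y_le) _.
have -> : c * ag ^+ k * vnorm (Phi *m z) =
    mxnorm Phi * (ag ^+ k * (Num.sqrt n%:R * vnorm (Phi *m z) / sigma_min Phi)).
  by rewrite /c; ring.
by rewrite ler_wpM2l ?mxnorm_ge0 // ler_wpM2l ?exprn_ge0.
Qed.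

Lemma fitting_error :
  vnorm (Phi *m th' - M *m Jhat) <= q * vnorm (Jk - M *m Jhat).
Proof.
have Phi_lsqB x : Phi *m x - M *m Jhat = Phi *m (x - lsq_sol Phi D Jhat).
  by rewrite mulmxBr Phi_lsq_sol.
rewrite !Phi_lsqB /th' iter_gd_stepB //.
exact: vnorm_Phi_iter_gd_mx_le.
Qed.

Lemma one_iteration_error :
  vnorm (Jpol mu' - Phi *m th') <=
    (alpha ^+ (m + H - 1) * dFV + q * (alpha ^+ (m + H - 1) * dFV + 1)) * e
    + ((1 + q) * ((alpha ^+ m + alpha ^+ (m + H - 1)) / (1 - alpha) * dFV + dapp + dFV * eps)
       + q / (1 - alpha)).
Proof.
set E := vnorm (Jpol mu' - M *m Jhat).
have split_err : vnorm (Jpol mu' - Phi *m th') <= E + vnorm (Phi *m th' - M *m Jhat).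
  have -> : Jpol mu' - Phi *m th' = (Jpol mu' - M *m Jhat) - (Phi *m th' - M *m Jhat).
    by rewrite opprB addrA subrK.
  by apply: le_trans (vnormD _ _) _; rewrite vnormN.
have Jk_err : vnorm (Jk - M *m Jhat) <= e + (1 - alpha)^-1 + E.
  have -> : Jk - M *m Jhat = (Jk - Jpol mu) + (Jpol mu - Jpol mu') + (Jpol mu' - M *m Jhat).
    by rewrite !addrA !subrK.
  apply: le_trans (vnormD _ _) _; rewrite lerD2r.
  apply: le_trans (vnormD _ _) _; rewrite lerD2l.
  exact: vnormB_boxed (inv1Balpha_ge0 alpha01) (Jpol_boxed P_ge0 P_sum1 r01 alpha01 _)
                      (Jpol_boxed P_ge0 P_sum1 r01 alpha01 _).
have fit := le_trans fitting_error (ler_wpM2l q_ge0 Jk_err).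
have := evaluation_error; rewrite -/E; set U := dapp + _ => eval.
have err_le : vnorm (Jpol mu' - Phi *m th') <= (1 + q) * U + q * e + q * (1 - alpha)^-1.
  have evalq := ler_wpM2l (addr_ge0 ler01 q_ge0) eval.
  by apply: le_trans split_err _; nra.
apply: le_trans err_le _; rewrite -subr_ge0.
have -> : alpha ^+ (m + H - 1) = alpha ^+ m * alpha ^+ H.-1 by rewrite -exprD -addnBA ?subn1.
set slack := (_ - _).
have -> : slack = (1 + q) * (alpha ^+ m * alpha ^+ H.-1 * (1 - alpha)^-1 * dFV).
  by rewrite /slack /U; ring.
have dFV_ge0 : 0 <= dFV := le_trans (mxnorm_ge0 _) mxnorm_Mproj_le.
by rewrite !mulr_ge0 ?addr_ge0 ?exprn_ge0 ?inv1Balpha_ge0.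
Qed.
End OneIteration.

Theorem mainTheorem8 (R : realType) (n d : nat) (A : finType)
  (P : A -> 'M[R]_n) (r : 'I_n -> A -> R) (alpha : R)
  (m H eta : nat) (gamma epsLA epsPE : R)
  (Phi : 'M[R]_(n, d)) (D : nat -> {set 'I_n})
  (mu : nat -> 'I_n -> A) (w : nat -> 'cV[R]_n) (theta : nat -> 'cV[R]_d) :
  (forall a i j, 0 <= P a i j) ->
  (forall a i, \sum_(j < n) P a i j = 1) ->
  (forall i a, 0 <= r i a <= 1) ->
  0 < alpha < 1 ->
  (0 < m)%N -> (0 < H)%N -> (0 < eta)%N -> 0 < gamma ->
  0 <= epsLA -> 0 <= epsPE -> (0 < d)%N ->
  (forall k, \rank (PhiD Phi (D k)) = d) ->
  (forall k, vnorm (iter H (Tbell P r alpha) (Phi *m theta k)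
               - Tmu P r alpha (mu k.+1) (iter H.-1 (Tbell P r alpha) (Phi *m theta k)))
             <= epsLA) ->
  (forall k i, i \notin D k -> w k.+1 i ord0 = 0) ->
  (forall k, vnorm (w k.+1) <= epsPE) ->
  (forall k, theta k.+1 =
     iter eta (gd_step gamma Phi (D k)
       (iter m (Tmu P r alpha (mu k.+1)) (iter H.-1 (Tbell P r alpha) (Phi *m theta k))
        + w k.+1)) (theta k)) ->
  let c := Num.sqrt (n%:R) * mxnorm Phi / sigma_min Phi in
  let aGD := alpha_GD gamma Phi D in
  let dFV := delta_FV Phi D in
  let dapp := delta_app P r alpha Phi D in
  let beta := alpha ^+ (m + H - 1) * dFV
              + c * aGD ^+ eta * (alpha ^+ (m + H - 1) * dFV + 1) in
  let tau := (1 + c * aGD ^+ eta)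
               * ((alpha ^+ m + alpha ^+ (m + H - 1)) / (1 - alpha) * dFV
                  + dapp + dFV * epsPE)
             + c * aGD ^+ eta / (1 - alpha) in
  forall k, (1 <= k)%N ->
    vnorm (Jpol P r alpha (mu k) - Phi *m theta k)
      <= beta * vnorm (Phi *m theta k.-1 - Jpol P r alpha (mu k.-1)) + tau.
Proof.
move=> P_ge0 P_sum1 r01 alpha01 _ H_gt0 _ _ _ _ d_gt0 rank_PhiD _ _ w_le theta_next.
move=> c aGD dFV dapp beta tau [//|k] _ /=; rewrite theta_next.
apply: one_iteration_error => //.
- exact: delta_FV_ge.
- exact: delta_app_ge.
- by move=> a; apply: alpha_GD_ge.
Qed.
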